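(* Let $n\ge 2$, $\lambda>0$, let $M$ be one of the listed symmetric spaces with associated function $\mathcal D_M$, and let $0<r<r_{max}(M)$. Let $h_r$ be the (unique) solution on $[0,r)$, real-analytic as a function of $u^2$, of $$h_r''(u)\,(h_r'(u))^{n-1}=e^{\lambda h_r(u)}\mathcal D_M(u),\quad u\in[0,r),\qquad \lim_{u\to r}h_r(u)=\infty.$$ Then: (1) $h_r'(u)>0$ and $h_r''(u)>0$ for all $u\in(0,r)$, and $\inf_{[0,r)}h_r=h_r(0)$; (2) $h_r'(0)=0$; (3) $h_r'(t)=\big(\int_0^t n e^{\lambda h_r(u)}\mathcal D_M(u)\,du\big)^{1/n}$ for all $t\in(0,r)$; (4) $\lim_{u\to r}h_r'(u)=\infty$ and $\lim_{u\to r}h_r''(u)=\infty$.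
   Context: For a real-analytic Riemannian manifold $M$ of real dimension $n$, the Grauert tube $T^rM=\{(x,v)\in TM:|v|<r/2\}$ carries the adapted complex structure (defined for $r<r_{max}(M)$), $\rho(x,v)=4|v|^2$ and $u=\sqrt\rho$. The functions are: $\mathcal D(u)=u^{n-1}$ for $M=\mathbb R^n$ ($r_{max}=\infty$); $\mathcal D(u)=(\sin u)^{n-1}$ for real hyperbolic space $H^n$ ($r_{max}=\pi$); $\mathcal D(u)=(\sinh u)^{n-1}$ for the round sphere and real projective space; $\mathcal D(u)=2^{n-1}(\cosh\frac u2)^k(\sinh\frac u2)^{n-1}$ with $k=1,3,7$ for the complex projective space, quaternionic projective space, and Cayley plane respectively ($r_{max}=\infty$ for compact rank-one spaces). In all cases $\mathcal D_M\ge0$ with $\mathcal D_M(u)=0$ iff $u=0$, $\mathcal D_M^{1/(n-1)}(0)=0$ and $(\mathcal D_M^{1/(n-1)})'(0)=1$. The function $h_r(u)$ (as a function on $T^rM$ through $u=\sqrt\rho$) is a Kähler potential for the complete Kähler–Einstein metric of Ricci curvature $-\lambda$ on $T^rM$. *)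

From Stdlib Require Import Reals Lra.
Open Scope R_scope.

Inductive SymSpace : Type :=
  | Euclid
  | HyperbolicSp
  | RoundSphere
  | RealProj
  | ComplexProj     (* CP^(n/2) *)
  | QuatProj        (* HP^(n/4) *)
  | CayleyPlane.    (* OP^2, n = 16 *)

Definition valid_dim (M : SymSpace) (n : nat) : Prop :=
  match M with
  | ComplexProj => Nat.even n = true
  | QuatProj => Nat.modulo n 4 = 0%nat
  | CayleyPlane => n = 16%nat
  | _ => True
  end.

Definition DM (M : SymSpace) (n : nat) (u : R) : R :=
  match M with
  | Euclid => u ^ (n - 1)
  | HyperbolicSp => (sin u) ^ (n - 1)
  | RoundSphere | RealProj => (sinh u) ^ (n - 1)
  | ComplexProj => 2 ^ (n - 1) * (cosh (u / 2)) ^ 1 * (sinh (u / 2)) ^ (n - 1)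
  | QuatProj => 2 ^ (n - 1) * (cosh (u / 2)) ^ 3 * (sinh (u / 2)) ^ (n - 1)
  | CayleyPlane => 2 ^ (n - 1) * (cosh (u / 2)) ^ 7 * (sinh (u / 2)) ^ (n - 1)
  end.

Definition below_rmax (M : SymSpace) (r : R) : Prop :=
  match M with
  | HyperbolicSp => r < PI
  | _ => True
  end.

Definition real_analytic_on_0b (g : R -> R) (b : R) : Prop :=
  forall x0, 0 <= x0 < b ->
    exists delta, 0 < delta /\
      exists an : nat -> R,
        forall x, Rabs (x - x0) < delta -> Pser an (x - x0) (g x).

Definition tends_to_infty_left (f : R -> R) (r : R) : Prop :=
  forall K, exists delta, 0 < delta /\
    forall u, r - delta < u < r -> K < f u.

Definition is_glb (E : R -> Prop) (m : R) : Prop :=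
  (forall y, E y -> m <= y) /\
  (forall b, (forall y, E y -> b <= y) -> b <= m).

From Stdlib Require Import Reals Ranalysis5 Lra Lia Psatz.
Open Scope R_scope.

(* Away from 0 the right-hand side e^(lam h) D of the equation is positive,
   so h' cannot vanish on (0, r); as h blows up at r, h' is positive there,
   and then so is h''.  Evenness of h in u gives h'(0) = 0, and
   (h'^n)' = n e^(lam h) D integrates to the formula for h'.  A function with
   increasing derivative that blows up has a derivative that blows up too.
   Finally, comparing (h'^n)' with (e^(lam h))' = lam h' e^(lam h) near r gives
   h'^n <= A + B e^(lam h), whence h'' = h' e^(lam h) D / h'^n >= c h' blows up. *)

Lemma cosh_pos x : 0 < cosh x.
Proof. unfold cosh; pose proof (exp_pos x); pose proof (exp_pos (- x)); lra. Qed.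

Lemma sinh_pos x : 0 < x -> 0 < sinh x.
Proof. intros Hx; rewrite <- sinh_0; apply sinh_lt, Hx. Qed.

Lemma continuity_DM M n : continuity (DM M n).
Proof. destruct M; unfold DM; reg. Qed.

Lemma DM_pos M n u : 0 < u -> below_rmax M u -> 0 < DM M n u.
Proof.
  intros Hu Hmax; destruct M; unfold DM; simpl in Hmax;
    try (apply Rmult_lt_0_compat; [apply Rmult_lt_0_compat |]); apply pow_lt;
    solve [lra | apply cosh_pos | apply sinh_pos; lra | apply sin_gt_0; lra].
Qed.

Lemma below_rmax_le M u r : u <= r -> below_rmax M r -> below_rmax M u.
Proof. destruct M; simpl; auto; lra. Qed.

Lemma Rpower_pow_inv x k : 0 < x -> (0 < k)%nat -> Rpower (x ^ k) (/ INR k) = x.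
Proof.
  intros Hx Hk.
  rewrite <- Rpower_pow, Rpower_mult, Rinv_r, Rpower_1 by (auto; apply not_0_INR; lia).
  reflexivity.
Qed.

Lemma derivable_pt_lim_even_0 f r l :
  0 < r -> (forall u, - r < u < r -> f (- u) = f u) ->
  derivable_pt_lim f 0 l -> l = 0.
Proof.
  intros Hr Heven Hd.
  assert (Hmirr : derivable_pt_lim (mirr_fct f) 0 (- l)).
  { apply derivable_pt_lim_mirr_fwd; rewrite Ropp_0, Ropp_involutive; exact Hd. }
  assert (Hopp : derivable_pt_lim f 0 (- l)).
  { apply (derivable_pt_lim_locally_ext (mirr_fct f) f 0 (- r) r); [lra | | exact Hmirr].
    intros z Hz; apply Heven, Hz. }
  pose proof (uniqueness_limite f 0 l (- l) Hd Hopp); lra.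
Qed.

Lemma tends_to_infty_left_witness f b x K :
  tends_to_infty_left f b -> x < b -> exists u, x < u < b /\ K < f u.
Proof.
  intros Hf Hx; destruct (Hf K) as [d [Hd Hu]].
  assert (0 < Rmin d (b - x)) by (apply Rmin_pos; lra).
  pose proof (Rmin_l d (b - x)); pose proof (Rmin_r d (b - x)).
  exists (b - Rmin d (b - x) / 2); split; [lra | apply Hu; lra].
Qed.

Lemma strict_incr_of_deriv_pos f f' a b :
  (forall x, a <= x < b -> derivable_pt_lim f x (f' x)) ->
  (forall x, a < x < b -> 0 < f' x) ->
  forall x y, a <= x < y -> y < b -> f x < f y.
Proof.
  intros Hd Hpos x y Hxy Hy.
  destruct (MVT_cor2 f f' x y) as [c [Hinc Hc]]; [lra | intros z Hz; apply Hd; lra |].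
  assert (0 < f' c) by (apply Hpos; lra).
  nra.
Qed.

(* A derivative that never vanishes cannot be negative anywhere: the blow-up
   forces it to be positive somewhere to the right, and it is continuous. *)
Lemma deriv_pos_of_nonvanishing f f' a b :
  (forall x, a < x < b -> derivable_pt_lim f x (f' x)) ->
  (forall x, a < x < b -> continuity_pt f' x) ->
  (forall x, a < x < b -> f' x <> 0) ->
  tends_to_infty_left f b ->
  forall x, a < x < b -> 0 < f' x.
Proof.
  intros Hd Hc Hnz Hf x Hx.
  destruct (Rtotal_order (f' x) 0) as [Hneg | [Hzero | Hpos]];
    [exfalso | exfalso; exact (Hnz x Hx Hzero) | exact Hpos].
  destruct (tends_to_infty_left_witness f b x (f x) Hf) as [u [Hu Hfu]]; [lra |].
  destruct (MVT_cor2 f f' x u) as [c [Hinc Hcu]]; [lra | intros y Hy; apply Hd; lra |].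
  assert (Hc_pos : 0 < f' c) by nra.
  destruct (IVT_interv f' x c) as [z [Hz Hz0]]; [intros y Hy; apply Hc; lra | lra | lra | lra |].
  exact (Hnz z ltac:(lra) Hz0).
Qed.

Lemma tends_to_infty_left_deriv f f' a b :
  a < b ->
  (forall x, a <= x < b -> derivable_pt_lim f x (f' x)) ->
  (forall x y, a < x < y -> y < b -> f' x <= f' y) ->
  tends_to_infty_left f b -> tends_to_infty_left f' b.
Proof.
  intros Hab Hd Hmono Hf K.
  destruct (tends_to_infty_left_witness f b a (f a + Rabs K * (b - a)) Hf Hab)
    as [u [Hu Hfu]].
  destruct (MVT_cor2 f f' a u) as [c [Hinc Hc]]; [lra | intros z Hz; apply Hd; lra |].
  assert (HcK : K < f' c) by (pose proof (Rle_abs K); pose proof (Rabs_pos K); nra).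
  exists (b - c); split; [lra |].
  intros y Hy; pose proof (Hmono c y ltac:(lra) ltac:(lra)); lra.
Qed.

Lemma increment_le_of_deriv_le F G F' G' a b :
  a <= b ->
  (forall x, a <= x <= b -> derivable_pt_lim F x (F' x)) ->
  (forall x, a <= x <= b -> derivable_pt_lim G x (G' x)) ->
  (forall x, a <= x <= b -> F' x <= G' x) ->
  F b - F a <= G b - G a.
Proof.
  intros Hab HF HG Hle.
  destruct (Req_dec a b) as [<- | Hne]; [lra |].
  destruct (MVT_cor2 (fun x => G x - F x) (fun x => G' x - F' x) a b) as [c [Hinc Hc]];
    [lra | intros x Hx; apply derivable_pt_lim_minus; auto |].
  assert (F' c <= G' c) by (apply Hle; lra).
  nra.
Qed.

Lemma RiemannInt_of_derivative f F a b :
  a <= b ->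
  (forall x, a <= x <= b -> continuity_pt f x) ->
  (forall x, a <= x <= b -> derivable_pt_lim F x (f x)) ->
  exists pr : Riemann_integrable f a b, RiemannInt pr = F b - F a.
Proof.
  intros Hab Hc Hd.
  exists (FTC_P1 Hab Hc Hab (Rle_refl b)).
  assert (HF : antiderivative f F a b).
  { split; [| exact Hab]; intros x Hx.
    exists (exist _ (f x) (Hd x Hx)); symmetry; apply derive_pt_eq_0, Hd, Hx. }
  destruct (antiderivative_Ucte f _ _ a b (RiemannInt_P29 Hab Hc) HF) as [C HC].
  rewrite (RiemannInt_P20 Hab (FTC_P1 Hab Hc)), !HC by lra.
  ring.
Qed.

Lemma continuity_pos_bounds f a b :
  a <= b ->
  (forall x, a <= x <= b -> continuity_pt f x) ->
  (forall x, a <= x <= b -> 0 < f x) ->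
  exists m M, 0 < m /\ forall x, a <= x <= b -> m <= f x <= M.
Proof.
  intros Hab Hc Hpos.
  destruct (continuity_ab_min f a b Hab Hc) as [xm [Hm Hxm]].
  destruct (continuity_ab_maj f a b Hab Hc) as [xM [HM HxM]].
  exists (f xm), (f xM); split; [apply Hpos, Hxm | intros x Hx; split; auto].
Qed.

Section BlowUpSolution.

Variables (n : nat) (lam r : R) (D h h1 h2 : R -> R).

Hypothesis n_ge2 : (2 <= n)%nat.
Hypothesis lam_gt0 : 0 < lam.
Hypothesis r_gt0 : 0 < r.
Hypothesis D_cont : continuity D.
Hypothesis D_pos : forall u, 0 < u <= r -> 0 < D u.
Hypothesis h_deriv : forall u, 0 <= u < r -> derivable_pt_lim h u (h1 u).
Hypothesis h1_deriv : forall u, 0 <= u < r -> derivable_pt_lim h1 u (h2 u).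
Hypothesis ode : forall u, 0 <= u < r -> h2 u * h1 u ^ (n - 1) = exp (lam * h u) * D u.
Hypothesis h_blowup : tends_to_infty_left h r.
Hypothesis h1_0 : h1 0 = 0.

Lemma h_cont u : 0 <= u < r -> continuity_pt h u.
Proof. intros Hu; apply derivable_continuous_pt; exists (h1 u); apply h_deriv, Hu. Qed.

Lemma h1_cont u : 0 <= u < r -> continuity_pt h1 u.
Proof. intros Hu; apply derivable_continuous_pt; exists (h2 u); apply h1_deriv, Hu. Qed.

Lemma ode_rhs_pos u : 0 < u < r -> 0 < exp (lam * h u) * D u.
Proof. intros Hu; apply Rmult_lt_0_compat; [apply exp_pos | apply D_pos; lra]. Qed.

Lemma h1_pos u : 0 < u < r -> 0 < h1 u.
Proof.
  apply (deriv_pos_of_nonvanishing h h1 0 r).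
  - intros x Hx; apply h_deriv; lra.
  - intros x Hx; apply h1_cont; lra.
  - intros x Hx Hzero; pose proof (ode x ltac:(lra)) as Hx'; pose proof (ode_rhs_pos x Hx).
    rewrite Hzero, pow_i in Hx' by lia; lra.
  - exact h_blowup.
Qed.

Lemma h2_pos u : 0 < u < r -> 0 < h2 u.
Proof.
  intros Hu; apply (Rmult_lt_reg_r (h1 u ^ (n - 1))); [apply pow_lt, h1_pos, Hu |].
  rewrite Rmult_0_l, ode by lra; apply ode_rhs_pos, Hu.
Qed.

Lemma h_incr x y : 0 <= x < y -> y < r -> h x < h y.
Proof. exact (strict_incr_of_deriv_pos h h1 0 r h_deriv h1_pos x y). Qed.

Lemma h1_incr x y : 0 <= x < y -> y < r -> h1 x < h1 y.
Proof. exact (strict_incr_of_deriv_pos h1 h2 0 r h1_deriv h2_pos x y). Qed.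

Lemma h_glb : is_glb (fun y => exists u, 0 <= u < r /\ y = h u) (h 0).
Proof.
  split.
  - intros y [u [Hu ->]]; destruct (Req_dec u 0) as [-> | Hu0]; [lra |].
    left; apply h_incr; lra.
  - intros b Hb; apply Hb; exists 0; split; [lra | reflexivity].
Qed.

Lemma h1_blowup : tends_to_infty_left h1 r.
Proof.
  apply (tends_to_infty_left_deriv h h1 0 r r_gt0 h_deriv); [| exact h_blowup].
  intros x y Hxy Hy; left; apply h1_incr; lra.
Qed.

Lemma h1_pow_deriv x : 0 <= x < r ->
  derivable_pt_lim (fun u => h1 u ^ n) x (INR n * exp (lam * h x) * D x).
Proof.
  intros Hx.
  replace (INR n * exp (lam * h x) * D x) with (INR n * h1 x ^ pred n * h2 x).
  - apply (derivable_pt_lim_comp h1 (fun y => y ^ n));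
      [apply h1_deriv, Hx | apply derivable_pt_lim_pow].
  - replace (pred n) with (n - 1)%nat by lia.
    rewrite (Rmult_assoc (INR n) (exp _)), <- ode by exact Hx; ring.
Qed.

Lemma exp_h_deriv x : 0 <= x < r ->
  derivable_pt_lim (fun u => exp (lam * h u)) x (exp (lam * h x) * (lam * h1 x)).
Proof.
  intros Hx; apply (derivable_pt_lim_comp (fun u => lam * h u) exp).
  - apply (derivable_pt_lim_scal h), h_deriv, Hx.
  - apply derivable_pt_lim_exp.
Qed.

Lemma h1_integral_formula t : 0 < t < r ->
  exists pr : Riemann_integrable (fun u => INR n * exp (lam * h u) * D u) 0 t,
    h1 t = Rpower (RiemannInt pr) (/ INR n).
Proof.
  intros Ht.
  destruct (RiemannInt_of_derivative (fun u => INR n * exp (lam * h u) * D u)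
              (fun u => h1 u ^ n) 0 t) as [pr Hpr]; [lra | | |].
  - intros x Hx; pose proof (h_cont x ltac:(lra)); reg.
  - intros x Hx; apply h1_pow_deriv; lra.
  - exists pr; rewrite Hpr, h1_0, pow_i, Rminus_0_r by lia.
    symmetry; apply Rpower_pow_inv; [apply h1_pos, Ht | lia].
Qed.

(* Since (h1^n)' = n e^(lam h) D <= n sup D e^(lam h) and (e^(lam h))' >= lam h1(r/2) e^(lam h)
   on [r/2, r), the choice B = n sup D / (lam h1(r/2)) makes h1^n - B e^(lam h) nonincreasing. *)
Lemma D_bounds : exists m M, 0 < m /\ forall x, r / 2 <= x <= r -> m <= D x <= M.
Proof.
  apply continuity_pos_bounds; [lra | intros x _; apply D_cont | intros x Hx; apply D_pos; lra].
Qed.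

Lemma h1_pow_le_exp :
  exists A B, 0 < B /\ forall t, r / 2 <= t < r -> h1 t ^ n <= A + B * exp (lam * h t).
Proof.
  destruct D_bounds as [m [Mx [Hm HD]]].
  assert (Ha1 : 0 < h1 (r / 2)) by (apply h1_pos; lra).
  assert (HMx : 0 < Mx) by (destruct (HD r ltac:(lra)); lra).
  assert (HnR : 0 < INR n) by (apply lt_0_INR; lia).
  set (B := INR n * Mx / (lam * h1 (r / 2))).
  assert (HB : 0 < B) by (apply Rdiv_lt_0_compat; nra).
  assert (HBl : B * lam * h1 (r / 2) = INR n * Mx) by (unfold B; field; lra).
  exists (h1 (r / 2) ^ n), B; split; [exact HB |]; intros t Ht.
  assert (Hcmp := increment_le_of_deriv_le (fun u => h1 u ^ n) (fun u => B * exp (lam * h u))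
    (fun u => INR n * exp (lam * h u) * D u) (fun u => B * (exp (lam * h u) * (lam * h1 u)))
    (r / 2) t ltac:(lra)).
  simpl in Hcmp.
  assert (H0 : 0 < B * exp (lam * h (r / 2))) by (apply Rmult_lt_0_compat; [exact HB | apply exp_pos]).
  enough (h1 t ^ n - h1 (r / 2) ^ n <= B * exp (lam * h t) - B * exp (lam * h (r / 2))) by lra.
  apply Hcmp.
  - intros x Hx; apply h1_pow_deriv; lra.
  - intros x Hx; apply (derivable_pt_lim_scal (fun u => exp (lam * h u))), exp_h_deriv; lra.
  - intros x Hx.
    assert (Hh1x : h1 (r / 2) <= h1 x)
      by (destruct (Req_dec x (r / 2)) as [-> | Hne]; [lra | left; apply h1_incr; lra]).
    destruct (HD x ltac:(lra)) as [_ HDx].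
    pose proof (exp_pos (lam * h x)) as HX.
    assert (HBl0 : 0 < B * lam) by (apply Rmult_lt_0_compat; lra).
    assert (INR n * D x <= B * lam * h1 x) by nra.
    nra.
Qed.

Lemma h2_ge_h1 : exists c t1, 0 < c /\ t1 < r /\ forall t, t1 < t < r -> c * h1 t <= h2 t.
Proof.
  destruct h1_pow_le_exp as [A [B [HB Hle]]].
  destruct D_bounds as [m [Mx [Hm HD]]].
  destruct (h_blowup (A / (B * lam))) as [d [Hd Hhd]].
  exists (m / (2 * B)), (Rmax (r / 2) (r - d)).
  split; [apply Rdiv_lt_0_compat; lra |].
  split; [apply Rmax_lub_lt; lra |].
  intros t Ht; pose proof (Rmax_l (r / 2) (r - d)); pose proof (Rmax_r (r / 2) (r - d)).
  assert (Hh1 : 0 < h1 t) by (apply h1_pos; lra).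
  assert (Hh2 : 0 < h2 t) by (apply h2_pos; lra).
  assert (HDt : m <= D t) by (apply HD; lra).
  assert (Hode := ode t ltac:(lra)).
  assert (Hpow : h1 t ^ n = h1 t * h1 t ^ (n - 1))
    by (replace n with (S (n - 1)) at 1 by lia; reflexivity).
  assert (HAh : A < B * lam * h t).
  { replace A with (B * lam * (A / (B * lam))) by (field; nra).
    apply Rmult_lt_compat_l; [nra | apply Hhd; lra]. }
  pose proof (Hle t ltac:(lra)) as Hlet.
  pose proof (exp_ineq1_le (lam * h t)).
  pose proof (exp_pos (lam * h t)).
  set (X := exp (lam * h t)) in *.
  assert (HAX : A < B * X) by nra.
  assert (Hlow : m * h1 t * X <= h2 t * h1 t ^ n).
  { rewrite Hpow; replace (h2 t * (h1 t * h1 t ^ (n - 1))) with (h1 t * (h2 t * h1 t ^ (n - 1)))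
      by ring.
    rewrite Hode; assert (0 < h1 t * X) by nra; nra. }
  assert (Hup : h2 t * h1 t ^ n <= h2 t * (2 * B * X))
    by (apply Rmult_le_compat_l; lra).
  apply (Rmult_le_reg_r (2 * B * X)); [nra |].
  replace (m / (2 * B) * h1 t * (2 * B * X)) with (m * h1 t * X) by (field; lra).
  lra.
Qed.

Lemma h2_blowup : tends_to_infty_left h2 r.
Proof.
  destruct h2_ge_h1 as [c [t1 [Hc [Ht1 Hge]]]].
  intros K; destruct (h1_blowup (K / c)) as [d [Hd Hu]].
  exists (Rmin d (r - t1)); split; [apply Rmin_pos; lra |].
  intros u Hu'; pose proof (Rmin_l d (r - t1)); pose proof (Rmin_r d (r - t1)).
  assert (HK : K / c < h1 u) by (apply Hu; lra).
  pose proof (Hge u ltac:(lra)).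
  apply (Rmult_lt_compat_l c) in HK; [| exact Hc].
  replace (c * (K / c)) with K in HK by (field; lra); lra.
Qed.

Lemma blowup_solution_properties :
  ((forall u, 0 < u < r -> 0 < h1 u /\ 0 < h2 u) /\
   is_glb (fun y => exists u, 0 <= u < r /\ y = h u) (h 0)) /\
  (forall t, 0 < t < r ->
     exists pr : Riemann_integrable (fun u => INR n * exp (lam * h u) * D u) 0 t,
       h1 t = Rpower (RiemannInt pr) (/ INR n)) /\
  (tends_to_infty_left h1 r /\ tends_to_infty_left h2 r).
Proof.
  split; [split; [intros u Hu; split; [apply h1_pos | apply h2_pos]; exact Hu | exact h_glb] |].
  split; [exact h1_integral_formula | split; [exact h1_blowup | exact h2_blowup]].
Qed.

End BlowUpSolution.

Theorem proposition2p1
  (n : nat) (lam : R) (M : SymSpace) (r : R)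
  (h h1 h2 g : R -> R)
  (Hn : (2 <= n)%nat) (Hlam : 0 < lam) (HM : valid_dim M n)
  (Hr : 0 < r) (Hrmax : below_rmax M r)
  (* h is real-analytic as a function of u^2 *)
  (Hg : real_analytic_on_0b g (r ^ 2))
  (Hhg : forall u, Rabs u < r -> h u = g (u ^ 2))
  (* h1 = h', h2 = h'' *)
  (Hh1 : forall u, Rabs u < r -> derivable_pt_lim h u (h1 u))
  (Hh2 : forall u, Rabs u < r -> derivable_pt_lim h1 u (h2 u))
  (Hode : forall u, 0 <= u < r ->
            h2 u * (h1 u) ^ (n - 1) = exp (lam * h u) * DM M n u)
  (Hinf : tends_to_infty_left h r) :
  ((forall u, 0 < u < r -> 0 < h1 u /\ 0 < h2 u) /\
   is_glb (fun y => exists u, 0 <= u < r /\ y = h u) (h 0)) /\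
  h1 0 = 0 /\
  (forall t, 0 < t < r ->
     exists pr : Riemann_integrable
                   (fun u => INR n * exp (lam * h u) * DM M n u) 0 t,
       h1 t = Rpower (RiemannInt pr) (/ INR n)) /\
  (tends_to_infty_left h1 r /\ tends_to_infty_left h2 r).
Proof.
  assert (HD : forall u, 0 < u <= r -> 0 < DM M n u)
    by (intros u Hu; apply DM_pos; [lra | apply (below_rmax_le M u r); [lra | exact Hrmax]]).
  assert (Hd1 : forall u, 0 <= u < r -> derivable_pt_lim h u (h1 u))
    by (intros u Hu; apply Hh1, Rabs_def1; lra).
  assert (Hd2 : forall u, 0 <= u < r -> derivable_pt_lim h1 u (h2 u))
    by (intros u Hu; apply Hh2, Rabs_def1; lra).
  assert (Hh10 : h1 0 = 0).
  { apply (derivable_pt_lim_even_0 h r); [exact Hr | | apply Hh1; rewrite Rabs_R0; exact Hr].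
    intros u Hu; rewrite !Hhg by (try rewrite Rabs_Ropp; apply Rabs_def1; lra).
    f_equal; ring. }
  destruct (blowup_solution_properties n lam r (DM M n) h h1 h2 Hn Hlam Hr
              (continuity_DM M n) HD Hd1 Hd2 Hode Hinf Hh10) as [Hshape [Hformula Hblowup]].
  exact (conj Hshape (conj Hh10 (conj Hformula Hblowup))).
Qed.
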